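(* Let $\Xi\subseteq\mathbb{R}^n$ be as in the context, $\Delta_1=[0,1]$, and let $\tilde{A}^k\in\mathbb{R}^{1\times n}$ for $k\in K=\{1,\dots,\kappa\}$. Consider $\mathcal{S}^1=\{(x,y_1,w)\in\Xi\times\Delta_1\times\mathbb{R}^n : y_1x_i=w_i\ \forall i\in N\}$ and $\mathcal{D}=\{(x,y_1,w,z)\in\Xi\times\Delta_1\times\mathbb{R}^n\times\mathbb{R}^\kappa : \tilde{A}^kw=z_k\ \forall k\in K\}$. Then $\mathrm{conv}\big((\mathcal{S}^1\times\mathbb{R}^\kappa)\cap\mathcal{D}\big)=\big(\mathrm{conv}(\mathcal{S}^1)\times\mathbb{R}^\kappa\big)\cap\mathcal{D}$.
   Context: $N=\{1,\dots,n\}$. $\Xi=\{x\in\mathbb{R}^n : Ex\ge f,\ 0\le x\le u\}$ is a network polytope of a directed network whose arcs are indexed by $N$: the rows of $Ex\ge f$ are, for each node $v$, the flow-balance constraint $\sum_{a\text{ out of }v}x_a-\sum_{a\text{ into }v}x_a\ge f_v$ and its negation $-\sum_{a\text{ out of }v}x_a+\sum_{a\text{ into }v}x_a\ge -f_v$, and $u$ is the arc-capacity vector. *)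

From mathcomp Require Import all_boot all_algebra.
From mathcomp Require Import reals.
Set Implicit Arguments. Unset Strict Implicit. Unset Printing Implicit Defensive.
Import GRing.Theory Num.Theory.
Local Open Scope ring_scope.

Definition conv (R : realType) (V : lmodType R) (S : V -> Prop) : V -> Prop :=
  fun p => exists (m : nat) (lam : 'I_m -> R) (q : 'I_m -> V),
    [/\ forall i, 0 <= lam i, \sum_(i < m) lam i = 1,
        forall i, S (q i) & p = \sum_(i < m) lam i *: q i].

(* Network polytope Xi = {x | E x >= f, 0 <= x <= u} of a directed network
   with nodes 'I_nv and arcs 'I_n; arc a goes from node (tl a) to node (hd a).
   For each node v the rows of E are the flow-balance constraint and its
   negation. *)
Definition outflow (R : realType) (n nv : nat) (tl : 'I_n -> 'I_nv)
  (x : 'cV[R]_n) (v : 'I_nv) : R := \sum_(a < n | tl a == v) x a 0.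
Definition inflow (R : realType) (n nv : nat) (hd : 'I_n -> 'I_nv)
  (x : 'cV[R]_n) (v : 'I_nv) : R := \sum_(a < n | hd a == v) x a 0.

Definition Xi (R : realType) (n nv : nat) (tl hd : 'I_n -> 'I_nv)
  (f : 'I_nv -> R) (u : 'cV[R]_n) (x : 'cV[R]_n) : Prop :=
  (forall v, outflow tl x v - inflow hd x v >= f v) /\
  (forall v, - outflow tl x v + inflow hd x v >= - f v) /\
  (forall a, 0 <= x a 0 <= u a 0).

Definition Delta1 (R : realType) (y : R) : Prop := 0 <= y <= 1.

Definition S1 (R : realType) (n nv : nat) (tl hd : 'I_n -> 'I_nv)
  (f : 'I_nv -> R) (u : 'cV[R]_n)
  (p : 'cV[R]_n * R^o * 'cV[R]_n) : Prop :=
  let: (x, y1, w) := p in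
  Xi tl hd f u x /\ Delta1 y1 /\ (forall i, y1 * x i 0 = w i 0).

Definition Dset (R : realType) (n nv kappa : nat) (tl hd : 'I_n -> 'I_nv)
  (f : 'I_nv -> R) (u : 'cV[R]_n) (At : 'I_kappa -> 'rV[R]_n)
  (p : 'cV[R]_n * R^o * 'cV[R]_n * 'cV[R]_kappa) : Prop :=
  let: (x, y1, w, z) := p in
  Xi tl hd f u x /\ Delta1 y1 /\ (forall k, (At k *m w) 0 0 = z k 0).

Definition timesRk (R : realType) (n kappa : nat)
  (A : 'cV[R]_n * R^o * 'cV[R]_n -> Prop)
  (p : 'cV[R]_n * R^o * 'cV[R]_n * 'cV[R]_kappa) : Prop := A p.1.

From mathcomp Require Import all_boot all_algebra.
From mathcomp Require Import reals.
Set Implicit Arguments. Unset Strict Implicit. Unset Printing Implicit Defensive.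
Import GRing.Theory Num.Theory.
Local Open Scope ring_scope.

(* The constraints defining D are convex: Xi x Delta1 is a polytope and z = A w
   is the graph of a linear map.  Hence a convex combination of points of
   (S^1 x R^kappa) cap D stays in D, and its (x, y1, w)-part is a convex
   combination of points of S^1.  Conversely, a convex combination of points
   of S^1 can be lifted coordinatewise along the linear map w |-> A w, and the
   lifted combination reproduces z because that map is linear. *)

Section ConvexHull.
Variable R : realType.

Definition conv_closed (V : lmodType R) (C : V -> Prop) :=
  forall v, conv C v -> C v.

Lemma sub_conv (V : lmodType R) (S T : V -> Prop) v :
  (forall q, S q -> T q) -> conv S v -> conv T v.
Proof.
move=> sST [m [lam [q [lam_ge0 lam_sum1 Sq ->]]]].
by exists m, lam, q; split=> // i; apply: sST.
Qed.

Lemma conv_preimage_linear (V W : lmodType R) (f : {linear V -> W})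
    (S : W -> Prop) v :
  conv (fun q => S (f q)) v -> conv S (f v).
Proof.
case=> m [lam [q [lam_ge0 lam_sum1 Sfq ->]]].
exists m, lam, (f \o q); split=> //.
by rewrite linear_sum; apply: eq_bigr => i _; rewrite linearZ.
Qed.

Lemma conv_graph (V W : lmodType R) (g : {linear V -> W}) (S : V -> Prop) v :
  conv S v -> conv (fun q : V * W => S q.1 /\ q.2 = g q.1) (v, g v).
Proof.
case=> m [lam [q [lam_ge0 lam_sum1 Sq ->]]].
exists m, lam, (fun i => (q i, g (q i))); split=> //.
  by move=> i; split; first exact: Sq.
rewrite [RHS]surjective_pairing !raddf_sum /=.
by congr pair; apply: eq_bigr => i _; rewrite linearZ.
Qed.

Lemma conv_closed_preimage (V W : lmodType R) (f : {linear V -> W})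
    (C : W -> Prop) :
  conv_closed C -> conv_closed (fun v => C (f v)).
Proof. by move=> cC v /conv_preimage_linear /cC. Qed.

Lemma conv_closed_eq (V W : lmodType R) (f g : {linear V -> W}) :
  conv_closed (fun v => f v = g v).
Proof.
move=> _ [m [lam [q [_ _ fq ->]]]]; rewrite !linear_sum.
by apply: eq_bigr => i _; rewrite !linearZ fq.
Qed.

Lemma convex_comb_ge m (lam g : 'I_m -> R) c :
  (forall i, 0 <= lam i) -> \sum_(i < m) lam i = 1 -> (forall i, c <= g i) ->
  c <= \sum_(i < m) lam i * g i.
Proof.
move=> lam_ge0 lam_sum1 cg.
rewrite -[c]mul1r -lam_sum1 big_distrl /=.
by apply: ler_sum => i _; apply: ler_wpM2l.
Qed.

Lemma convex_comb_le m (lam g : 'I_m -> R) c :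
  (forall i, 0 <= lam i) -> \sum_(i < m) lam i = 1 -> (forall i, g i <= c) ->
  \sum_(i < m) lam i * g i <= c.
Proof.
move=> lam_ge0 lam_sum1 gc.
rewrite -[c]mul1r -lam_sum1 big_distrl /=.
by apply: ler_sum => i _; apply: ler_wpM2l.
Qed.

Lemma conv_closed_Delta1 : conv_closed (@Delta1 R : R^o -> Prop).
Proof.
move=> _ [m [lam [y [lam_ge0 lam_sum1 /(_ _) /andP Dy ->]]]].
by apply/andP; split;
  [apply: convex_comb_ge | apply: convex_comb_le] => // i; case: (Dy i).
Qed.

End ConvexHull.

Section NetworkPolytope.
Variables (R : realType) (n nv : nat) (tl hd : 'I_n -> 'I_nv).
Variables (f : 'I_nv -> R) (u : 'cV[R]_n).

Lemma sum_scale_mxE k l m (lam : 'I_m -> R) (x : 'I_m -> 'M[R]_(k, l)) a b :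
  (\sum_(i < m) lam i *: x i) a b = \sum_(i < m) lam i * x i a b.
Proof. by rewrite summxE; apply: eq_bigr => i _; rewrite mxE. Qed.

Lemma sum_entries_comb (P : pred 'I_n) m (lam : 'I_m -> R)
    (x : 'I_m -> 'cV[R]_n) :
  \sum_(a < n | P a) (\sum_(i < m) lam i *: x i) a 0 =
  \sum_(i < m) lam i * \sum_(a < n | P a) x i a 0.
Proof.
under eq_bigr => a _ do rewrite sum_scale_mxE.
by rewrite exchange_big /=; apply: eq_bigr => i _; rewrite big_distrr.
Qed.

Lemma conv_closed_Xi : conv_closed (Xi tl hd f u).
Proof.
move=> _ [m [lam [x [lam_ge0 lam_sum1 Xix ->]]]].
rewrite /Xi /outflow /inflow; split; [|split] => [v|v|a].
- rewrite !sum_entries_comb -sumrB.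
  under eq_bigr => i _ do rewrite -mulrBr.
  by apply: convex_comb_ge => // i; case: (Xix i) => ->.
- rewrite !sum_entries_comb -sumrN -big_split /=.
  under eq_bigr => i _ do rewrite -mulrN -mulrDr.
  by apply: convex_comb_ge => // i; case: (Xix i) => _ [->].
- rewrite sum_scale_mxE; apply/andP; split;
    [apply: convex_comb_ge | apply: convex_comb_le] => // i;
    by case: (Xix i) => _ [_ /(_ a) /andP[]].
Qed.

Variables (kappa : nat) (At : 'I_kappa -> 'rV[R]_n).
Local Notation A := (\matrix_k At k).

Lemma DsetE p :
  Dset tl hd f u At p <->
  [/\ Xi tl hd f u p.1.1.1, Delta1 p.1.1.2 & p.2 = A *m p.1.2].
Proof.
case: p => [[[x y] w] z] /=.
have AwE k : (A *m w) k 0 = (At k *m w) 0 0.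
  by rewrite -[in RHS](rowK At) -row_mul [RHS]mxE.
split=> [[Xix [Dy Awz]] | [Xix Dy ->]].
- by split=> //; apply/matrixP => k j; rewrite ord1 AwE.
- by do 2!split=> //; move=> k; rewrite AwE.
Qed.

Lemma conv_closed_Dset : conv_closed (Dset tl hd f u At).
Proof.
have cX := conv_closed_preimage (f := fst \o fst \o fst) conv_closed_Xi.
have cD :=
  conv_closed_preimage (f := snd \o fst \o fst) (@conv_closed_Delta1 R).
have cA := conv_closed_eq (f := snd) (g := mulmx A \o snd \o fst).
move=> p hp; apply/DsetE; split; [apply: cX | apply: cD | apply: cA];
  by apply: sub_conv hp => q /DsetE[].
Qed.

End NetworkPolytope.

Theorem proposition3 (R : realType) (n nv kappa : nat)
  (tl hd : 'I_n -> 'I_nv) (f : 'I_nv -> R) (u : 'cV[R]_n)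
  (At : 'I_kappa -> 'rV[R]_n)
  (p : 'cV[R]_n * R^o * 'cV[R]_n * 'cV[R]_kappa) :
  conv (fun q : 'cV[R]_n * R^o * 'cV[R]_n * 'cV[R]_kappa => timesRk (S1 tl hd f u) q /\ Dset tl hd f u At q) p
  <-> (timesRk (conv (S1 tl hd f u)) p /\ Dset tl hd f u At p).
Proof.
split=> [hp | [S1p Dp]].
- split.
  + by apply: (conv_preimage_linear (f := fst)); apply: sub_conv hp => q [].
  + by apply: conv_closed_Dset; apply: sub_conv hp => q [].
- have /DsetE[_ _ pzE] := Dp.
  rewrite [p]surjective_pairing pzE.
  have := conv_graph (mulmx (\matrix_k At k) \o snd) S1p.
  apply: sub_conv => -[[[x y] w] z] [S1q zE]; split=> //.
  by case: S1q => Xix [Dy _]; apply/DsetE.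
Qed.
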